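(* In the two-bus model of the context, let $\boldsymbol\omega=(\overline{\mathbf q},\mathbf d)$ and $\boldsymbol\omega'=(\overline{\mathbf q},\mathbf d')$ be instances with the same generation capacities, both feasible for \textsf{ED-2b} and \textsf{SCED-2b}, such that $d_2'=d_2$, $d_1'\ge d_1$, $d_1+d_2>0$, and $\overline q_1\ge d_1'+d_2$. Then $\mathsf{PoS}(\boldsymbol\omega')\le\mathsf{PoS}(\boldsymbol\omega)$.
   Context: Two-bus network: buses $v_1,v_2$ joined by two parallel lines $e_1,e_2$ with susceptances $B_1,B_2>0$ and thermal limits $\overline f_1,\overline f_2>0$. Bus $i\in\{1,2\}$ has a generator with capacity $\overline q_i\ge 0$ and linear cost $\alpha_i q_i$, and a demand $d_i\ge 0$; throughout $0<\alpha_1\le\alpha_2$ (bus 1 is the cheap bus). An instance is $\boldsymbol\omega=(\overline{\mathbf q},\mathbf d)$ with $\overline{\mathbf q}=(\overline q_1,\overline q_2)$, $\mathbf d=(d_1,d_2)$. Define $f^{\mathsf{ed}}:=(B_1+B_2)\min\{\overline f_1/B_1,\overline f_2/B_2\}$ and $f^{\mathsf{sc}}:=\min\{\overline f_1,\overline f_2\}$ (note $f^{\mathsf{sc}}\le f^{\mathsf{ed}}$). The economic dispatch problem \textsf{ED-2b} is: minimize $\alpha_1q_1+\alpha_2q_2$ over $(q_1,q_2)$ subject to $0\le q_1\le\overline q_1$, $0\le q_2\le\overline q_2$, $q_1+q_2=d_1+d_2$, and $-f^{\mathsf{ed}}\le q_1-d_1\le f^{\mathsf{ed}}$. The security-constrained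 problem \textsf{SCED-2b} is the same problem with the additional constraint $-f^{\mathsf{sc}}\le q_1-d_1\le f^{\mathsf{sc}}$. Let $c^\star_{\mathsf{ed}}(\boldsymbol\omega)$ and $c^\star_{\mathsf{sc}}(\boldsymbol\omega)$ be the optimal values of \textsf{ED-2b} and \textsf{SCED-2b} for an instance $\boldsymbol\omega$ feasible for both. The price of security of $\boldsymbol\omega$ is $\mathsf{PoS}(\boldsymbol\omega):=c^\star_{\mathsf{sc}}(\boldsymbol\omega)/c^\star_{\mathsf{ed}}(\boldsymbol\omega)$. *)

From Stdlib Require Import Reals Lra.
Open Scope R_scope.

(* Network data: susceptances B1 B2, thermal limits fb1 fb2. *)
Definition f_ed (B1 B2 fb1 fb2 : R) : R := (B1 + B2) * Rmin (fb1 / B1) (fb2 / B2).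
Definition f_sc (fb1 fb2 : R) : R := Rmin fb1 fb2.

Definition feas_ed (B1 B2 fb1 fb2 qb1 qb2 d1 d2 q1 q2 : R) : Prop :=
  0 <= q1 <= qb1 /\ 0 <= q2 <= qb2 /\ q1 + q2 = d1 + d2 /\
  - f_ed B1 B2 fb1 fb2 <= q1 - d1 <= f_ed B1 B2 fb1 fb2.

Definition feas_sc (B1 B2 fb1 fb2 qb1 qb2 d1 d2 q1 q2 : R) : Prop :=
  feas_ed B1 B2 fb1 fb2 qb1 qb2 d1 d2 q1 q2 /\
  - f_sc fb1 fb2 <= q1 - d1 <= f_sc fb1 fb2.

Definition cost (a1 a2 q1 q2 : R) : R := a1 * q1 + a2 * q2.

Definition is_opt_value (F : R -> R -> Prop) (a1 a2 c : R) : Prop :=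
  (exists q1 q2, F q1 q2 /\ cost a1 a2 q1 q2 = c) /\
  (forall q1 q2, F q1 q2 -> c <= cost a1 a2 q1 q2).

Definition feasible (F : R -> R -> Prop) : Prop := exists q1 q2, F q1 q2.

(* Both ED-2b and SCED-2b only constrain the net injection q1 - d1 at bus 1, by an
   interval containing 0.  When the cheap generator can cover the whole demand,
   shifting an optimal dispatch by the extra demand d1' - d1 at bus 1 stays feasible
   and is again optimal, so both optimal costs grow by the same amount
   a1 (d1' - d1) >= 0.  Adding the same nonnegative amount to numerator and
   denominator of a ratio c_sc / c_ed >= 1 can only decrease it. *)
From Stdlib Require Import Reals Lra.
Open Scope R_scope.

Definition dispatch_feas (C : R -> Prop) (qb1 qb2 d1 d2 q1 q2 : R) : Prop :=
  0 <= q1 <= qb1 /\ 0 <= q2 <= qb2 /\ q1 + q2 = d1 + d2 /\ C (q1 - d1).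

Definition closed_toward_zero (C : R -> Prop) : Prop :=
  forall x y, C x -> x <= y <= 0 -> C y.

Lemma is_opt_value_ext (F G : R -> R -> Prop) a1 a2 c :
  (forall q1 q2, F q1 q2 <-> G q1 q2) ->
  is_opt_value F a1 a2 c -> is_opt_value G a1 a2 c.
Proof.
  intros FG [[q1 [q2 [Fq Hc]]] Hmin]; split.
  - exists q1, q2; split; [apply FG |]; assumption.
  - intros x y Gxy; apply Hmin, FG, Gxy.
Qed.

Lemma is_opt_value_le_incl (F G : R -> R -> Prop) a1 a2 c c' :
  (forall q1 q2, G q1 q2 -> F q1 q2) ->
  is_opt_value F a1 a2 c -> is_opt_value G a1 a2 c' -> c <= c'.
Proof.
  intros GF [_ Hmin] [[q1 [q2 [Gq <-]]] _]; apply Hmin, GF, Gq.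
Qed.

Lemma is_opt_value_dispatch_pos C a1 a2 qb1 qb2 d1 d2 c :
  0 < a1 -> a1 <= a2 -> 0 < d1 + d2 ->
  is_opt_value (dispatch_feas C qb1 qb2 d1 d2) a1 a2 c -> 0 < c.
Proof.
  intros Ha1 Ha12 Hd [[q1 [q2 [(Hq1 & Hq2 & Hbal & _) <-]]] _]; unfold cost.
  assert (a1 * q2 <= a2 * q2) by (apply Rmult_le_compat_r; lra).
  assert (0 < a1 * (d1 + d2)) by (apply Rmult_lt_0_compat; lra).
  nra.
Qed.

Section RaiseCheapDemand.

Variables (C : R -> Prop) (a1 a2 qb1 qb2 d1 d2 d1' : R).
Hypotheses (HC : closed_toward_zero C) (Ha12 : a1 <= a2)
  (Hd1 : 0 <= d1) (Hd2 : 0 <= d2) (Hd1' : d1 <= d1') (Hcap : d1' + d2 <= qb1).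

Lemma is_opt_value_raise_cheap_demand c c' :
  is_opt_value (dispatch_feas C qb1 qb2 d1 d2) a1 a2 c ->
  is_opt_value (dispatch_feas C qb1 qb2 d1' d2) a1 a2 c' ->
  c' = c + a1 * (d1' - d1).
Proof.
  intros [[q1 [q2 [(Hq1 & Hq2 & Hbal & Cq) Hc]]] Hmin]
         [[p1 [p2 [(Hp1 & Hp2 & Hbal' & Cp) Hc']]] Hmin'].
  unfold cost in Hc, Hc'; apply Rle_antisym.
  - assert (Hshift : c' <= cost a1 a2 (q1 + (d1' - d1)) q2).
    { apply Hmin'; repeat split; try lra.
      now replace (q1 + (d1' - d1) - d1') with (q1 - d1) by ring. }
    unfold cost in Hshift; lra.
  - destruct (Rle_or_lt (d1' - d1) p1) as [Hbig | Hsmall].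
    + assert (Hunshift : c <= cost a1 a2 (p1 - (d1' - d1)) p2).
      { apply Hmin; repeat split; try lra.
        now replace (p1 - (d1' - d1) - d1) with (p1 - d1') by ring. }
      unfold cost in Hunshift; lra.
    (* Too little cheap output to unshift: then serving everything from bus 2 is
       feasible for the old instance and already costs at most c' - a1 (d1' - d1). *)
    + assert (Hall2 : c <= cost a1 a2 0 (d1 + d2)).
      { apply Hmin; repeat split; try lra.
        apply (HC (p1 - d1')); [exact Cp | lra]. }
      assert (Hgap : 0 <= (a2 - a1) * (d1' - d1 - p1)) by (apply Rmult_le_pos; lra).
      unfold cost in Hall2; nra.
Qed.

End RaiseCheapDemand.

Lemma Rdiv_add_le_Rdiv (c c' k : R) :
  0 < c -> c <= c' -> 0 <= k -> (c' + k) / (c + k) <= c' / c.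
Proof.
  intros Hc Hcc' Hk.
  apply (Rmult_le_reg_r (c * (c + k))); [apply Rmult_lt_0_compat; lra |].
  field_simplify; nra.
Qed.

Lemma f_ed_ge0 B1 B2 fb1 fb2 :
  0 < B1 -> 0 < B2 -> 0 < fb1 -> 0 < fb2 -> 0 <= f_ed B1 B2 fb1 fb2.
Proof.
  intros; unfold f_ed; apply Rmult_le_pos; [lra |].
  apply Rmin_glb; left; apply Rdiv_lt_0_compat; assumption.
Qed.

Lemma f_sc_ge0 fb1 fb2 : 0 < fb1 -> 0 < fb2 -> 0 <= f_sc fb1 fb2.
Proof. intros; unfold f_sc; apply Rmin_glb; lra. Qed.

Definition ed_flow B1 B2 fb1 fb2 (x : R) : Prop :=
  - f_ed B1 B2 fb1 fb2 <= x <= f_ed B1 B2 fb1 fb2.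

Definition sc_flow B1 B2 fb1 fb2 (x : R) : Prop :=
  ed_flow B1 B2 fb1 fb2 x /\ - f_sc fb1 fb2 <= x <= f_sc fb1 fb2.

Lemma feas_ed_dispatch B1 B2 fb1 fb2 qb1 qb2 d1 d2 q1 q2 :
  feas_ed B1 B2 fb1 fb2 qb1 qb2 d1 d2 q1 q2 <->
  dispatch_feas (ed_flow B1 B2 fb1 fb2) qb1 qb2 d1 d2 q1 q2.
Proof. reflexivity. Qed.

Lemma feas_sc_dispatch B1 B2 fb1 fb2 qb1 qb2 d1 d2 q1 q2 :
  feas_sc B1 B2 fb1 fb2 qb1 qb2 d1 d2 q1 q2 <->
  dispatch_feas (sc_flow B1 B2 fb1 fb2) qb1 qb2 d1 d2 q1 q2.
Proof. unfold feas_sc, feas_ed, dispatch_feas, sc_flow, ed_flow; tauto. Qed.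

Lemma ed_flow_closed B1 B2 fb1 fb2 :
  0 < B1 -> 0 < B2 -> 0 < fb1 -> 0 < fb2 -> closed_toward_zero (ed_flow B1 B2 fb1 fb2).
Proof.
  intros HB1 HB2 Hf1 Hf2 x y; pose proof (f_ed_ge0 B1 B2 fb1 fb2 HB1 HB2 Hf1 Hf2).
  unfold ed_flow; lra.
Qed.

Lemma sc_flow_closed B1 B2 fb1 fb2 :
  0 < B1 -> 0 < B2 -> 0 < fb1 -> 0 < fb2 -> closed_toward_zero (sc_flow B1 B2 fb1 fb2).
Proof.
  intros HB1 HB2 Hf1 Hf2 x y [Hx Hx'] Hy; pose proof (f_sc_ge0 fb1 fb2 Hf1 Hf2).
  split; [exact (ed_flow_closed B1 B2 fb1 fb2 HB1 HB2 Hf1 Hf2 x y Hx Hy) | lra].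
Qed.

Theorem lemma2 (B1 B2 fb1 fb2 a1 a2 qb1 qb2 d1 d2 d1' d2' : R)
  (c_ed c_sc c_ed' c_sc' : R) :
  0 < B1 -> 0 < B2 -> 0 < fb1 -> 0 < fb2 ->
  0 < a1 -> a1 <= a2 ->
  0 <= qb1 -> 0 <= qb2 -> 0 <= d1 -> 0 <= d2 -> 0 <= d1' -> 0 <= d2' ->
  feasible (feas_ed B1 B2 fb1 fb2 qb1 qb2 d1 d2) ->
  feasible (feas_sc B1 B2 fb1 fb2 qb1 qb2 d1 d2) ->
  feasible (feas_ed B1 B2 fb1 fb2 qb1 qb2 d1' d2') ->
  feasible (feas_sc B1 B2 fb1 fb2 qb1 qb2 d1' d2') ->
  d2' = d2 -> d1 <= d1' -> 0 < d1 + d2 -> d1' + d2 <= qb1 ->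
  is_opt_value (feas_ed B1 B2 fb1 fb2 qb1 qb2 d1 d2) a1 a2 c_ed ->
  is_opt_value (feas_sc B1 B2 fb1 fb2 qb1 qb2 d1 d2) a1 a2 c_sc ->
  is_opt_value (feas_ed B1 B2 fb1 fb2 qb1 qb2 d1' d2') a1 a2 c_ed' ->
  is_opt_value (feas_sc B1 B2 fb1 fb2 qb1 qb2 d1' d2') a1 a2 c_sc' ->
  c_sc' / c_ed' <= c_sc / c_ed.
Proof.
  intros HB1 HB2 Hf1 Hf2 Ha1 Ha12 _ _ Hd1 Hd2 _ _ _ _ _ _ -> Hd1' Hd Hcap
    Oed Osc Oed' Osc'.
  apply (is_opt_value_ext _ _ _ _ _ (feas_ed_dispatch _ _ _ _ _ _ _ _)) in Oed, Oed'.
  apply (is_opt_value_ext _ _ _ _ _ (feas_sc_dispatch _ _ _ _ _ _ _ _)) in Osc, Osc'.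
  rewrite (is_opt_value_raise_cheap_demand _ _ _ _ _ _ _ _
             (ed_flow_closed _ _ _ _ HB1 HB2 Hf1 Hf2) Ha12 Hd1 Hd2 Hd1' Hcap _ _ Oed Oed').
  rewrite (is_opt_value_raise_cheap_demand _ _ _ _ _ _ _ _
             (sc_flow_closed _ _ _ _ HB1 HB2 Hf1 Hf2) Ha12 Hd1 Hd2 Hd1' Hcap _ _ Osc Osc').
  apply Rdiv_add_le_Rdiv.
  - exact (is_opt_value_dispatch_pos _ _ _ _ _ _ _ _ Ha1 Ha12 Hd Oed).
  - refine (is_opt_value_le_incl _ _ _ _ _ _ _ Oed Osc).
    intros q1 q2 (Hq1 & Hq2 & Hbal & Hflow & _); exact (conj Hq1 (conj Hq2 (conj Hbal Hflow))).
  - apply Rmult_le_pos; lra.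
Qed.
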